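(* Let $R$ be a unital associative ring, $n\ge1$, $D_1,D_2$ invertible diagonal $n\times n$ matrices over $R$, and $A,B\in\widehat M_n(R)$. Then $B=D_1^{-1}AD_2$ holds if and only if there is $x\in R^*$ such that $D_1=D_2=xI$ (with $I$ the $n\times n$ identity matrix) and $B=x^{-1}Ax$ (entrywise left multiplication by $x^{-1}$ and right multiplication by $x$). In particular, $A\sim B$ if and only if there is $x\in R^*$ with $B=x^{-1}Ax$.
   Context: $R^*$ denotes the units of $R$. $\widehat M_n(R)=\{A=\{a_{j,k}\}\in M_n(R): a_{1,k}=a_{k,1}=1\text{ for }1\le k\le n\}$. $A\sim B$ means $B=D_1^{-1}AD_2$ for some invertible diagonal matrices $D_1,D_2$. *)

From HB Require Import structures.
From mathcomp Require Import all_boot all_order all_algebra.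
Set Implicit Arguments. Unset Strict Implicit. Unset Printing Implicit Defensive.
Import GRing.Theory.
Local Open Scope ring_scope.

(* Matrices are n.+1 x n.+1 (so n >= 1 is built in); index ord0 is the paper's index 1. *)

Definition hatM (R : unitRingType) (n : nat) (A : 'M[R]_n.+1) : Prop :=
  forall k : 'I_n.+1, A ord0 k = 1 /\ A k ord0 = 1.

Definition inv_diag_with (R : unitRingType) (n : nat) (D E : 'M[R]_n.+1) : Prop :=
  is_diag_mx D /\ D *m E = 1%:M /\ E *m D = 1%:M.

Definition inv_diag (R : unitRingType) (n : nat) (D : 'M[R]_n.+1) : Prop :=
  exists E, inv_diag_with D E.

Definition mx_sim (R : unitRingType) (n : nat) (A B : 'M[R]_n.+1) : Prop :=
  exists D1 E1 D2 : 'M[R]_n.+1,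
    inv_diag_with D1 E1 /\ inv_diag D2 /\ B = E1 *m A *m D2.

From mathcomp Require Import all_boot all_order all_algebra.

Set Implicit Arguments.
Unset Strict Implicit.
Unset Printing Implicit Defensive.

Import GRing.Theory.
Local Open Scope ring_scope.

(* Write B = E A F with E = diag(e_i), F = diag(f_j) invertible. Since A and B
   have 1's in their first row, 1 = e_1 f_j, so F = e_1^{-1} I; since they have
   1's in their first column, 1 = e_i f_1 = e_i e_1^{-1}, so E = e_1 I. Hence
   B = x^{-1} A x entrywise with x = e_1^{-1}; the converse is a computation. *)

Section DiagonalScaling.

Variables (R : unitRingType) (n : nat).
Implicit Types (A B D E : 'M[R]_n.+1) (d : 'rV[R]_n.+1).

Lemma diag_mx_eq_scalar d (x : R) : diag_mx d = x%:M <-> forall j, d 0 j = x.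
Proof.
split=> [/matrixP eq_dx j | eq_dx].
  by have := eq_dx j j; rewrite !mxE eqxx mulr1n.
by rewrite -diag_const_mx; congr diag_mx; apply/rowP=> j; rewrite !mxE eq_dx.
Qed.

Lemma inv_diag_withE D E :
  inv_diag_with D E ->
  exists2 d : 'rV[R]_n.+1, (forall j, d 0 j \is a GRing.unit) &
    D = diag_mx d /\ E = diag_mx (map_mx GRing.inv d).
Proof.
case=> /diag_mxP [d ->] [DE ED].
have unit_d j : d 0 j \is a GRing.unit.
  apply/unitrP; exists (E j j).
  move/matrixP/(_ j j): DE; move/matrixP/(_ j j): ED.
  by rewrite mul_diag_mx mul_mx_diag !mxE eqxx => -> ->.
exists d => //; split=> //.
have inv_dd : diag_mx (map_mx GRing.inv d) *m diag_mx d = 1%:M.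
  by rewrite mul_mx_diag; apply/matrixP=> i j; rewrite !mxE;
    case: eqVneq => [->|]; rewrite ?mulVr ?mul0r.
by rewrite -[E]mul1mx -inv_dd -mulmxA DE mulmx1.
Qed.

Lemma scalar_inv_diag_with (x : R) :
  x \is a GRing.unit -> inv_diag_with (x%:M : 'M[R]_n.+1) x^-1%:M.
Proof.
move=> unit_x; split; first exact: scalar_mx_is_diag.
by rewrite -!scalar_mxM mulrV ?mulVr.
Qed.

Lemma mul_diag_mx_diagE d A (f : 'rV[R]_n.+1) i j :
  (diag_mx d *m A *m diag_mx f) i j = d 0 i * A i j * f 0 j.
Proof. by rewrite mul_mx_diag mul_diag_mx !mxE. Qed.

Lemma hatM_scaling A B (e f : 'I_n.+1 -> R) :
  hatM A -> hatM B -> e ord0 \is a GRing.unit ->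
  (forall i j, B i j = e i * A i j * f j) ->
  (forall j, f j = (e ord0)^-1) /\ (forall i, e i = e ord0).
Proof.
move=> hatA hatB unit_e0 eB.
have f_inv j : f j = (e ord0)^-1.
  have := eB ord0 j; rewrite (proj1 (hatA j)) (proj1 (hatB j)) mulr1 => e0f.
  by rewrite -[f j]mul1r -(mulVr unit_e0) -mulrA -e0f mulr1.
split=> // i.
have := eB i ord0; rewrite (proj2 (hatA i)) (proj2 (hatB i)) mulr1 f_inv => eie0.
by rewrite -[e i]mulr1 -(mulVr unit_e0) mulrA -eie0 mul1r.
Qed.

Lemma diag_scaling_hatM D1 E1 D2 A B :
  inv_diag_with D1 E1 -> inv_diag D2 -> hatM A -> hatM B ->
  (B = E1 *m A *m D2 <->
   exists x : R, x \is a GRing.unit /\ D1 = x%:M /\ D2 = x%:M /\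
     B = \matrix_(i, j) (x^-1 * A i j * x)).
Proof.
move=> /inv_diag_withE [d unit_d [-> ->]] [E2] /inv_diag_withE [f _ [-> _]] hatA hatB.
split=> [eB | [x [unit_x [/diag_mx_eq_scalar d_x [/diag_mx_eq_scalar f_x ->]]]]].
- pose x := d 0 ord0.
  have eB_entry i j : B i j = (d 0 i)^-1 * A i j * f 0 j.
    by rewrite eB mul_diag_mx_diagE mxE.
  have unit_x' : x^-1 \is a GRing.unit by rewrite unitrV unit_d.
  have [f_x' dinv_x] :=
    hatM_scaling (e := fun i => (d 0 i)^-1) (f := f 0) hatA hatB unit_x' eB_entry.
  have f_x j : f 0 j = x by rewrite f_x' invrK.
  have d_x i : d 0 i = x by apply: invr_inj; apply: dinv_x.
  exists x; split; first exact: unit_d.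
  split; first exact/diag_mx_eq_scalar.
  split; first exact/diag_mx_eq_scalar.
  by apply/matrixP=> i j; rewrite eB mul_diag_mx_diagE !mxE d_x f_x.
- by apply/matrixP=> i j; rewrite mul_diag_mx_diagE !mxE d_x f_x.
Qed.

End DiagonalScaling.

Theorem lemma3 (R : unitRingType) (n : nat) :
  (forall (D1 E1 D2 A B : 'M[R]_n.+1),
     inv_diag_with D1 E1 -> inv_diag D2 -> hatM A -> hatM B ->
     (B = E1 *m A *m D2 <->
      exists x : R, x \is a GRing.unit /\ D1 = x%:M /\ D2 = x%:M /\
        B = \matrix_(i, j) (x^-1 * A i j * x)))
  /\
  (forall A B : 'M[R]_n.+1, hatM A -> hatM B ->
     (mx_sim A B <->
      exists x : R, x \is a GRing.unit /\ B = \matrix_(i, j) (x^-1 * A i j * x))).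
Proof.
split=> [|A B hatA hatB]; first exact: diag_scaling_hatM.
split=> [[D1 [E1 [D2 [invD1 [invD2 eB]]]]] | [x [unit_x eB]]].
  have [x [unit_x [_ [_ ->]]]] := (diag_scaling_hatM invD1 invD2 hatA hatB).1 eB.
  by exists x.
have invx := scalar_inv_diag_with n unit_x.
have invx' : inv_diag (x%:M : 'M[R]_n.+1) by exists x^-1%:M.
exists x%:M, x^-1%:M, x%:M; do 2!split=> //.
by apply/(diag_scaling_hatM invx invx' hatA hatB); exists x.
Qed.
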